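(* Let $n$ be a natural number with $2^k\le n<2^{k+1}$, and let $G$ be the graph with $n$ vertices obtained as the induced subgraph of the hypercube $Q_{k+1}$ on the vertices whose labels are the $(k+1)$-term binary representations of $0,1,\dots,n-1$. Then for any two vertices $u$ and $v$ of $G$, perfect state transfer from $u$ to $v$ is possible by at most two CQC-hoppings: either there is a spanning subgraph $H$ of $G$ and a time $t_0>0$ with $|\langle v|\exp(-it_0A(H))|u\rangle|=1$, or there exist a vertex $w$ of $G$, spanning subgraphs $H_1,H_2$ of $G$ and times $t_1,t_2>0$ with $|\langle w|\exp(-it_1A(H_1))|u\rangle|=1$ and $|\langle v|\exp(-it_2A(H_2))|w\rangle|=1$.
   Context: The hypercube $Q_m$ is the graph with vertex set $\{0,1\}^m$, two vertices being adjacent if and only if their labels have Hamming distance $1$. A spanning subgraph $H$ of $G$ has $V(H)=V(G)$ and $E(H)\subseteq E(G)$. For a graph $H$ with adjacency matrix $A(H)$, associate to each vertex $x$ the standard basis vector $|x\rangle\in\mathbb{C}^{|V(H)|}$; $H$ has perfect state transfer from $a$ to $b$ at time $t$ if $|\langle b|\exp(-itA(H))|a\rangle|=1$. A CQC-hopping from $a$ to $b$ on $G$ consists of switching off edges of $G$ to obtain a spanning subgraph $H$, performing perfect state transfer from $a$ to $b$ in $H$, and switching the removed edges back on. *)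

From HB Require Import structures.
From mathcomp Require Import all_boot all_order all_algebra.
From mathcomp Require Import all_classical all_reals all_analysis.
From mathcomp Require Import complex.
Set Implicit Arguments. Unset Strict Implicit. Unset Printing Implicit Defensive.
Import Order.TTheory GRing.Theory Num.Theory.
Local Open Scope ring_scope.

Definition bitn (i m : nat) : bool := odd (m %/ 2 ^ i).

Definition hamming (k u v : nat) : nat :=
  #|[set i : 'I_k.+1 | bitn i u != bitn i v]|.

Definition Gadj (k n : nat) (u v : 'I_n) : bool := hamming k u v == 1%N.

Definition spanning_subgraph (k n : nat) (H : rel 'I_n) : Prop :=
  (forall u v, H u v = H v u) /\ (forall u v, H u v -> Gadj k u v).

Definition adjmx (R : realType) (n : nat) (H : rel 'I_n) : 'M[R]_n :=
  \matrix_(i, j) (H i j)%:R.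

(* real and imaginary parts of the coefficient (-i t)^k / k! *)
Definition re_coef (R : realType) (t : R) (k : nat) : R :=
  if odd k then 0 else (-1) ^+ k./2 * t ^+ k / (k`!)%:R.
Definition im_coef (R : realType) (t : R) (k : nat) : R :=
  if odd k then - ((-1) ^+ k./2 * t ^+ k / (k`!)%:R) else 0.

(* <b| exp(-i t A) |a> = sum_k (-i t)^k/k! (A^k)_{b a}, as a complex number *)
Definition expitA_entry (R : realType) (n : nat) (A : 'M[R]_n) (t : R)
    (b a : 'I_n) : R[i] :=
  (limn (fun N => \sum_(0 <= k < N) re_coef t k * (A ^+ k) b a)
   +i* limn (fun N => \sum_(0 <= k < N) im_coef t k * (A ^+ k) b a))%C.

Definition PST (R : realType) (n : nat) (H : rel 'I_n) (a b : 'I_n) (t : R) : Prop :=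
  `|expitA_entry (adjmx R H) t b a| = 1.

From HB Require Import structures.
From mathcomp Require Import all_boot all_order all_algebra.
From mathcomp Require Import all_classical all_reals all_analysis.
From mathcomp Require Import complex.
From mathcomp Require Import ring.
Import Order.TTheory GRing.Theory Num.Theory numFieldNormedType.Exports.
Set Implicit Arguments. Unset Strict Implicit. Unset Printing Implicit Defensive.
Local Open Scope ring_scope.
Local Open Scope complex_scope.

(* Identify a vertex with the set of positions of the 1-bits of its label.
   If A is a subset of B, every set between A and B has a numeric value at most
   that of B, so the interval [A, B] lies in G and induces a hypercube of
   dimension d = #|B :\: A|.  Its adjacency matrix is diagonalised by the
   characters Y |-> (-1)^#|Q :&: Y| (Q a subset of B :\: A), with eigenvalues
   d - 2 #|Q|; summing the exponential series gives
   <B| exp(-itA) |A> = (-i sin t)^d, of modulus 1 at t = pi/2.  Hopping from u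
   to the vertex w with bits u :&: bits v inside [w, u], then from w to v
   inside [w, v], proves the theorem. *)

Definition bits k m : {set 'I_k.+1} := [set i : 'I_k.+1 | bitn i m].
Definition setnum k (X : {set 'I_k.+1}) : nat := (\sum_(i in X) 2 ^ i)%N.

Lemma bitn_sum (f : nat -> bool) K i :
  bitn i (\sum_(0 <= j < K) f j * 2 ^ j)%N = (i < K)%N && f i.
Proof.
elim: K f i => [|K IH] f i; first by rewrite big_geq // /bitn div0n.
rewrite big_nat_recl // expn0 muln1.
have -> : (\sum_(0 <= j < K) f j.+1 * 2 ^ j.+1 = 2 * \sum_(0 <= j < K) f j.+1 * 2 ^ j)%N.
  by rewrite big_distrr; apply: eq_bigr => j _; rewrite expnS mulnCA.
case: i => [|i].
  by rewrite /bitn expn0 divn1 oddD oddM /= addbF; case: (f 0%N).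
rewrite /bitn expnS divnMA addnC mulnC divnMDl //.
rewrite (divn_small (_ : f 0%N < 2)%N); last by case: (f 0%N).
by rewrite addn0 -/(bitn i _) (IH (fun j => f j.+1)).
Qed.

Lemma bitn_expansion K m :
  m = (\sum_(0 <= j < K) bitn j m * 2 ^ j + 2 ^ K * (m %/ 2 ^ K))%N.
Proof.
elim: K => [|K IH]; first by rewrite big_geq // expn0 divn1 mul1n.
rewrite big_nat_recr //= -addnA {1}IH; congr (_ + _)%N.
rewrite /bitn expnSr divnMA; set q := (m %/ 2 ^ K)%N.
rewrite {1}(divn_eq q 2) modn2.
by case: (odd q); ring.
Qed.

Lemma setnum_nat k (X : {set 'I_k.+1}) :
  setnum X = (\sum_(0 <= j < k.+1) (inord j \in X) * 2 ^ j)%N.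
Proof.
rewrite /setnum big_mkord big_mkcond; apply: eq_bigr => i _.
by rewrite inord_val; case: (i \in X); rewrite ?mul1n ?mul0n.
Qed.

Lemma setnumK k : cancel (@setnum k) (bits k).
Proof.
by move=> X; apply/setP => i; rewrite inE setnum_nat bitn_sum ltn_ord inord_val.
Qed.

Lemma bitsK k m : (m < 2 ^ k.+1)%N -> setnum (bits k m) = m.
Proof.
move=> hm; rewrite setnum_nat [in RHS](bitn_expansion k.+1 m) divn_small // muln0 addn0.
by apply: eq_big_nat => j /andP [_ hj]; rewrite inE inordK.
Qed.

Lemma leq_setnum k (X Y : {set 'I_k.+1}) : X \subset Y -> (setnum X <= setnum Y)%N.
Proof.
move=> sXY; rewrite /setnum [X in (_ <= X)%N](big_setID X).
by rewrite (finset.setIidPr sXY) leq_addr.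
Qed.

Section Vertices.
Variables (k n : nat).
Hypothesis n_le : (n <= 2 ^ k.+1)%N.

Lemma bits_inj : injective (fun x : 'I_n => bits k x).
Proof.
move=> x y /(congr1 (@setnum k)); rewrite !bitsK => [/val_inj //||];
  exact: leq_trans (ltn_ord _) n_le.
Qed.

Lemma vertex_of_bits (b : 'I_n) (X : {set 'I_k.+1}) :
  X \subset bits k b -> {x : 'I_n | bits k x = X}.
Proof.
move=> sXb; have lt_Xn : (setnum X < n)%N.
  apply: leq_ltn_trans (leq_setnum sXb) _.
  by rewrite bitsK ?ltn_ord // (leq_trans (ltn_ord b) n_le).
by exists (Ordinal lt_Xn); rewrite /= setnumK.
Qed.

End Vertices.

Section Toggle.
Variable T : finType.

Definition toggle (X : {set T}) (j : T) : {set T} := [set i | (i \in X) != (i == j)].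

Definition between (A B X : {set T}) : bool := (A \subset X) && (X \subset B).

Lemma in_toggle X j i : (i \in toggle X j) = ((i \in X) != (i == j)).
Proof. by rewrite inE. Qed.

Lemma toggle_inj X : injective (toggle X).
Proof.
move=> j j' /setP /(_ j); rewrite !in_toggle eqxx.
by case: (eqVneq j j') => // _; case: (j \in X).
Qed.

Lemma between_toggle A B X j :
  between A B X -> between A B (toggle X j) = (j \in B :\: A).
Proof.
move=> /andP [/fintype.subsetP sAX /fintype.subsetP sXB]; rewrite finset.in_setD.
apply/andP/andP => [[/fintype.subsetP sAY /fintype.subsetP sYB] | [jA jB]].
  split; apply/negP => hj.
    by have := sAY _ hj; rewrite in_toggle eqxx (sAX _ hj).
  case: (boolP (j \in X)) => [/sXB // | /negbTE jX].
  by have := sYB j; rewrite in_toggle jX eqxx => /(_ isT).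
split; apply/fintype.subsetP => i; rewrite in_toggle.
  move=> iA; have /negbTE ij : i != j by apply: contraNneq jA => <-.
  by rewrite (sAX _ iA) ij.
by case: (eqVneq i j) => [-> // | _]; rewrite eqbF_neg negbK => /sXB.
Qed.

End Toggle.

Lemma sumr_indicator_inj {R : nzRingType} (I T : finType) (f : I -> T) (S : {set I}) y :
  injective f -> \sum_(j in S) (y == f j)%:R = (y \in f @: S)%:R :> R.
Proof.
move=> f_inj; case: (boolP (y \in f @: S)) => [/imsetP [j0 j0S ->] | yS].
  rewrite (bigD1 j0) //= eqxx big1 ?addr0 // => j /andP [_ /negbTE j_j0].
  by rewrite (inj_eq f_inj) eq_sym j_j0.
rewrite big1 // => j jS; case: eqP => // yj; move: yS.
by rewrite yj imset_f.
Qed.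

Section CubeWalks.
Variables (R : comNzRingType) (T : finType) (S : {set T}).

(* The factor [(i \in S)%:R] kills the characters indexed by Q not contained
   in S, so that sums over characters may range over all of {set T}. *)
Definition cube_char (Q Y : {set T}) : R :=
  \prod_(i in Q) ((i \in S)%:R * (-1) ^+ (i \in Y)).

Definition cube_eigval (Q : {set T}) : R := \sum_(i in S) (-1) ^+ (i \in Q).

Definition cube_walks (m : nat) (Y : {set T}) : R :=
  \sum_Q cube_char Q Y * cube_eigval Q ^+ m.

Lemma cube_char_toggle Q Y j :
  cube_char Q (toggle Y j) = (-1) ^+ (j \in Q) * cube_char Q Y.
Proof.
rewrite /cube_char; case: (boolP (j \in Q)) => [jQ | jQ]; last first.
  rewrite mul1r; apply: eq_bigr => i iQ; rewrite in_toggle.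
  have /negbTE -> : i != j by apply: contraNneq jQ => <-.
  by rewrite eqbF_neg negbK.
rewrite !(bigD1 j jQ) /= mulrA; congr (_ * _).
  rewrite in_toggle eqxx.
  by case: (j \in S); case: (j \in Y); rewrite /= ?expr0 ?expr1; ring.
by apply: eq_bigr => i /andP [_ /negbTE ij]; rewrite in_toggle ij eqbF_neg negbK.
Qed.

Lemma cube_walksS m Y :
  cube_walks m.+1 Y = \sum_(j in S) cube_walks m (toggle Y j).
Proof.
rewrite /cube_walks exchange_big; apply: eq_bigr => Q _.
under eq_bigr do rewrite cube_char_toggle -mulrA mulrC -mulrA.
by rewrite -!big_distrr exprSr.
Qed.

Lemma cube_walks0 Y : cube_walks 0 Y = \prod_(i in S) (1 + (-1) ^+ (i \in Y)).
Proof.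
rewrite [RHS]big_mkcond /=.
have -> : \prod_i (if i \in S then 1 + (-1) ^+ (i \in Y) else 1)
        = \prod_i ((i \in S)%:R * (-1) ^+ (i \in Y) + 1) :> R.
  by apply: eq_bigr => i _; case: (i \in S); rewrite ?mul1r ?mul0r ?add0r // addrC.
rewrite bigA_distr; apply: eq_bigr => Q _.
by rewrite expr0 mulr1 /cube_char big_mkcond.
Qed.

Lemma cube_walks0_disjoint (Y : {set T}) : [disjoint S & Y] -> cube_walks 0 Y = 2 ^+ #|S|.
Proof.
move=> dSY; rewrite cube_walks0 -prodr_const; apply: eq_bigr => i iS.
by rewrite (disjointFr dSY iS).
Qed.

Lemma cube_walks0_meet (Y : {set T}) j : j \in S -> j \in Y -> cube_walks 0 Y = 0.
Proof.
by move=> jS jY; rewrite cube_walks0 (bigD1 j jS) /= jY addrN mul0r.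
Qed.

End CubeWalks.

Lemma trmxX (R : comNzRingType) n (M : 'M[R]_n) m : (M ^+ m)^T = M^T ^+ m.
Proof.
elim: m => [|m IH]; first by rewrite !expr0 trmx1.
by rewrite exprS exprSr -!mulmxE trmx_mul IH.
Qed.

Section ExpEntry.
Variable R : realType.

Definition expNi (x : R) : R[i] := cos x +i* - sin x.

Lemma expNiD x y : expNi (x + y) = expNi x * expNi y.
Proof. by rewrite /expNi cosD sinD; simpc; congr (_ +i* _); ring. Qed.

Lemma expNi0 : expNi 0 = 1.
Proof. by rewrite /expNi cos0 sin0 oppr0. Qed.

Lemma re_coefE (t l : R) m : re_coef t m * l ^+ m = cos_coeff (l * t) m.
Proof.
rewrite /re_coef /cos_coeff /=; case: (odd m) => /=; first by rewrite !mul0r.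
rewrite exprMn -exprnP; ring.
Qed.

Lemma im_coefE (t l : R) m : im_coef t m * l ^+ m = - sin_coeff (l * t) m.
Proof.
rewrite /im_coef /sin_coeff /=; case ho: (odd m) => /=; last by rewrite !mul0r oppr0.
have -> : m.-1./2 = m./2.
  by move: ho; case: m => // m /=; rewrite uphalf_half => /negbTE ->.
rewrite exprMn; ring.
Qed.

Lemma cvg_weighted_sum (I : finType) (w : I -> R) (f : I -> nat -> R) (L : I -> R) :
  (forall i, f i @ \oo --> L i)%classic ->
  ((fun N => \sum_i w i * f i N) @ \oo --> \sum_i w i * L i)%classic.
Proof.
move=> f_L; apply: cvg_big => [|i _]; last exact: cvgMr.
exact: (@pseudometric_normed_Zmodule.add_continuous R R).
Qed.

Lemma expitA_entry_spectral n (A : 'M[R]_n) (I : finType) (w l : I -> R) t b a :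
  (forall m, (A ^+ m) b a = \sum_q w q * l q ^+ m) ->
  expitA_entry A t b a = \sum_q (w q)%:C * expNi (l q * t).
Proof.
move=> Aw; rewrite /expitA_entry.
have -> : \sum_q (w q)%:C * expNi (l q * t) =
    (\sum_q w q * cos (l q * t)) +i* (\sum_q w q * - sin (l q * t)).
  elim: (index_enum I) => [|q r IH]; first by rewrite !big_nil.
  by rewrite !big_cons IH /expNi; simpc.
have re_series : (fun N => \sum_(0 <= m < N) re_coef t m * (A ^+ m) b a)
    = (fun N => \sum_q w q * series (cos_coeff (l q * t)) N).
  apply/funext => N; under eq_bigr do rewrite Aw mulr_sumr.
  rewrite exchange_big; apply: eq_bigr => q _; rewrite mulr_sumr.
  by apply: eq_bigr => m _; rewrite mulrCA re_coefE.
have im_series : (fun N => \sum_(0 <= m < N) im_coef t m * (A ^+ m) b a)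
    = (fun N => \sum_q w q * - series (sin_coeff (l q * t)) N).
  apply/funext => N; under eq_bigr do rewrite Aw mulr_sumr.
  rewrite exchange_big; apply: eq_bigr => q _; rewrite -sumrN mulr_sumr.
  by apply: eq_bigr => m _; rewrite mulrCA im_coefE.
rewrite re_series im_series; congr (_ +i* _); apply: (cvg_lim (@Rhausdorff R)).
  by apply: cvg_weighted_sum => q; rewrite unlock; apply: is_cvg_series_cos_coeff.
apply: cvg_weighted_sum => q; apply: cvgN.
by rewrite unlock; apply: is_cvg_series_sin_coeff.
Qed.

Lemma expitA_entry_tr n (A : 'M[R]_n) t a b :
  expitA_entry A^T t a b = expitA_entry A t b a.
Proof.
rewrite /expitA_entry; congr (limn _ +i* limn _); apply/funext => N;
  by apply: eq_bigr => m _; rewrite -trmxX mxE.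
Qed.

Lemma PST_sym n (H : rel 'I_n) a b (t : R) :
  symmetric H -> PST H a b t -> PST H b a t.
Proof.
move=> symH; have adjT : (adjmx R H)^T = adjmx R H.
  by apply/matrixP => i j; rewrite !mxE symH.
by rewrite /PST -expitA_entry_tr adjT.
Qed.

End ExpEntry.

Lemma expNi_sub (R : realType) (t : R) : expNi t - expNi (- t) = 0 +i* (-2 * sin t).
Proof. by rewrite /expNi cosN sinN opprK; simpc; congr (_ +i* _); ring. Qed.

Lemma sum_cube_char_expNi (R : realType) (T : finType) (S Y : {set T}) (t : R) :
  S \subset Y ->
  \sum_Q (cube_char R S Q Y)%:C * expNi (cube_eigval R S Q * t)
    = (0 +i* (-2 * sin t)) ^+ #|S|.
Proof.
move=> /fintype.subsetP sSY.
pose F i := if i \in S then - expNi (- t) else 0.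
pose G i := if i \in S then expNi t else 1.
have factor Q : (cube_char R S Q Y)%:C * expNi (cube_eigval R S Q * t)
    = \prod_i (if i \in Q then F i else G i).
  rewrite /cube_char /cube_eigval mulr_suml (big_morph _ (@expNiD R) (expNi0 R)).
  rewrite rmorph_prod big_mkcond [X in _ * X]big_mkcond -big_split.
  apply: eq_bigr => i _ /=.
  rewrite /F /G; case: (boolP (i \in S)) => [iS | _]; case: (i \in Q);
    rewrite ?iS ?(sSY _ iS) /= ?mul1r ?mul0r ?mulN1r ?mulr1 ?rmorph0 ?mul0r //.
  by rewrite rmorphN rmorph1 mulN1r.
under eq_bigr do rewrite factor.
rewrite -bigA_distr -prodr_const [RHS]big_mkcond; apply: eq_bigr => i _.
by rewrite /F /G; case: (i \in S) => /=; rewrite ?add0r // addrC expNi_sub.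
Qed.

Lemma Gadj_toggle k n (x y : 'I_n) :
  Gadj k x y = [exists j, bits k y == toggle (bits k x) j].
Proof.
rewrite /Gadj /hamming; apply/cards1P/existsP => [[j /setP xy] | [j /eqP yx]].
  exists j; apply/eqP/setP => i; move: (xy i); rewrite !inE.
  by case: (bitn i x); case: (bitn i y); case: (i == j).
exists j; apply/setP => i; move/setP: yx => /(_ i); rewrite !inE.
by case: (bitn i x); case: (bitn i y); case: (i == j).
Qed.

Lemma GadjC k n : symmetric (@Gadj k n).
Proof.
move=> x y; rewrite /Gadj /hamming.
suff -> : [set i : 'I_k.+1 | bitn i x != bitn i y]
          = [set i : 'I_k.+1 | bitn i y != bitn i x].
  by [].
by apply/setP => i; rewrite !inE eq_sym.
Qed.

Definition subcube_graph k n (a b : 'I_n) : rel 'I_n := fun x y =>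
  [&& between (bits k a) (bits k b) (bits k x),
      between (bits k a) (bits k b) (bits k y) & Gadj k x y].

Lemma subcube_graph_spanning k n (a b : 'I_n) : spanning_subgraph k (subcube_graph k a b).
Proof.
split=> [x y | x y /and3P [] //]; rewrite /subcube_graph GadjC.
by case: (between _ _ (bits k x)); case: (between _ _ (bits k y)).
Qed.

Section Subcube.
Variables (R : realType) (k n : nat).
Hypothesis n_le : (n <= 2 ^ k.+1)%N.
Variables a b : 'I_n.
Hypothesis sab : bits k a \subset bits k b.

Let A := bits k a.
Let B := bits k b.
Let S := B :\: A.
Let Adj := adjmx R (subcube_graph k a b).

Lemma subcube_graphE (x y : 'I_n) : between A B (bits k x) ->
  subcube_graph k a b x y = (bits k y \in toggle (bits k x) @: S).
Proof.
move=> hx; rewrite /subcube_graph hx Gadj_toggle /=.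
apply/andP/imsetP => [[hy /existsP [j /eqP yj]] | [j jS yj]].
  by exists j; rewrite // -(between_toggle j hx) -yj.
by split; [rewrite yj between_toggle | apply/existsP; exists j; rewrite yj].
Qed.

Lemma sum_bits_eq (F : {set 'I_k.+1} -> R) (X : {set 'I_k.+1}) : X \subset B ->
  \sum_(y : 'I_n) (bits k y == X)%:R * F (bits k y) = F X.
Proof.
move=> sXB; have [x0 x0X] := vertex_of_bits n_le sXB.
rewrite (bigD1 x0) //= x0X eqxx mul1r big1 ?addr0 // => y yx0.
have /negbTE -> : bits k y != X by rewrite -x0X (inj_eq (bits_inj n_le)).
by rewrite mul0r.
Qed.

Lemma subcube_adj_sum (x : 'I_n) (F : {set 'I_k.+1} -> R) : between A B (bits k x) ->
  \sum_y Adj x y * F (bits k y) = \sum_(j in S) F (toggle (bits k x) j).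
Proof.
move=> hx; have toggle_x_inj := @toggle_inj _ (bits k x).
under eq_bigr do
  rewrite mxE (subcube_graphE _ hx) -(sumr_indicator_inj _ _ toggle_x_inj) mulr_suml.
rewrite exchange_big; apply: eq_bigr => j jS; apply: sum_bits_eq.
by move: jS; rewrite -(between_toggle j hx) => /andP [].
Qed.

Lemma subcube_adj_pow m (x : 'I_n) :
  (Adj ^+ m) x a
  = (between A B (bits k x))%:R * cube_walks R S m (bits k x) / 2 ^+ #|S|.
Proof.
have pow2_neq0 : 2 ^+ #|S| != 0 :> R by rewrite expf_neq0 ?pnatr_eq0.
elim: m x => [|m IH] x.
  rewrite expr0 mxE; case: (eqVneq x a) => [-> | xa].
    have dSA : [disjoint S & A] by have := subxx S; rewrite {2}/S subsetD => /andP [].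
    by rewrite /between subxx sab mul1r cube_walks0_disjoint ?divff.
  case: (boolP (between A B (bits k x))) => [/andP [sAx sxB] | _]; last by rewrite !mul0r.
  have /fintype.properP [_ [j jx jA]] : A \proper bits k x.
    by rewrite finset.properEneq sAx andbT; apply: contra_neq xa => /(bits_inj n_le) ->.
  have jS : j \in S by rewrite finset.in_setD jA (fintype.subsetP sxB).
  by rewrite (cube_walks0_meet R jS jx) mulr0 mul0r.
rewrite exprS -mulmxE mxE; case: (boolP (between A B (bits k x))) => [hx | hx].
  transitivity (\sum_y Adj x y * (cube_walks R S m (bits k y) / 2 ^+ #|S|)).
    apply: eq_bigr => y _; rewrite IH !mxE.
    case: (boolP (subcube_graph k a b x y)) => [/and3P [_ -> _] | _];
      by rewrite ?mul1r ?mul0r.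
  rewrite (@subcube_adj_sum x (fun Y => cube_walks R S m Y / 2 ^+ #|S|) hx).
  by rewrite -mulr_suml -cube_walksS mul1r.
rewrite mul0r mul0r big1 // => y _.
by rewrite mxE /subcube_graph (negbTE hx) mul0r.
Qed.

Lemma subcube_amplitude (t : R) :
  expitA_entry Adj t b a = (0 +i* - sin t) ^+ #|S|.
Proof.
have bB : between A B B by rewrite /between sab subxx.
pose w Q := cube_char R S Q B / 2 ^+ #|S|.
rewrite (@expitA_entry_spectral R n Adj _ w (cube_eigval R S)); last first.
  move=> m; rewrite subcube_adj_pow bB mul1r /cube_walks mulr_suml.
  by apply: eq_bigr => Q _; rewrite mulrAC.
under eq_bigr do rewrite rmorphM mulrAC.
rewrite -mulr_suml sum_cube_char_expNi ?subsetDl //.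
rewrite rmorphV ?unitfE ?expf_neq0 ?pnatr_eq0 // rmorphXn -exprVn -exprMn.
by congr (_ ^+ _); simpc; congr (_ +i* _); rewrite expr0n addr0; field.
Qed.

Lemma subcube_PST : PST (subcube_graph k a b) a b (pi / 2 : R).
Proof.
rewrite /PST subcube_amplitude normrX sin_pihalf normc_def /=.
by rewrite expr0n sqrrN expr1n add0r sqrtr1 expr1n.
Qed.

End Subcube.

Theorem mainTheorem7 (R : realType) (k n : nat)
  (hlo : (2 ^ k <= n)%N) (hhi : (n < 2 ^ k.+1)%N) (u v : 'I_n) :
  (exists (H : rel 'I_n) (t0 : R),
      spanning_subgraph k H /\ 0 < t0 /\ PST H u v t0)
  \/
  (exists (w : 'I_n) (H1 H2 : rel 'I_n) (t1 t2 : R),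
      [/\ spanning_subgraph k H1, spanning_subgraph k H2,
          0 < t1, 0 < t2 & PST H1 u w t1 /\ PST H2 w v t2]).
Proof.
right; have n_le := ltnW hhi.
have [w bits_w] := vertex_of_bits n_le (subsetIl (bits k u) (bits k v)).
have pi_half_gt0 : 0 < pi / 2 :> R by rewrite divr_gt0 ?pi_gt0.
exists w, (subcube_graph k w u), (subcube_graph k w v), (pi / 2), (pi / 2).
have [symHu _] := subcube_graph_spanning k w u.
split=> //; [exact: subcube_graph_spanning | exact: subcube_graph_spanning | split].
  by apply: PST_sym => //; apply: (subcube_PST R n_le); rewrite bits_w subsetIl.
by apply: (subcube_PST R n_le); rewrite bits_w subsetIr.
Qed.
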